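(* The following hold. 1. Let $C>1$, $k\in\mathbb{N}\setminus\{1\}$ and $p=p(n)\geq Cn^{-2/k}$. If $k'\leq k$ and $F_1:=K_{k'}$, then $\Phi_{F_1}\geq Cn$. 2. Let $C>1$, $k\in\mathbb{N}\setminus\{1\}$ and $p=p(n)\geq Cn^{-2/k}$. Let $3\leq k'\leq k$, let $F_2:=K_{k'}^-$ be the complete graph on $k'$ vertices with one edge removed, and let $w\in V(F_2)$ be one of the endpoints of the removed edge. Then $\Phi_{F_2}\geq Cn$ and $\Phi_{F_2,w}\geq\min\{Cn^{1-\frac{2}{k}},Cn^{\frac{2}{k}}\}\geq Cn^{\frac{1}{k}}$. 3. Let $F_3,F_4$ be graphs with vertex subsets $W_3\subseteq V(F_3)$, $W_4\subseteq V(F_4)$ (each spanning no edges), let $\Phi_3:=\Phi_{F_3,W_3}$ and $\Phi_4:=\Phi_{F_4,W_4}$, and suppose $\Phi_3,\Phi_4\geq1$. Let $F_5$ be the union of $F_3$ and $F_4$ meeting in exactly one vertex $x\in(V(F_3)\setminus W_3)\cap(V(F_4)\setminus W_4)$, and let $F_6$ be the disjoint union of $F_3$ and $F_4$. With $W_5:=W_3\sqcup W_4$, we have $\Phi_{F_5,W_5}\geq\min\{\Phi_3,\Phi_4,\Phi_3\Phi_4n^{-1}\}$ and $\Phi_{F_6,W_5}=\min\{\Phi_3,\Phi_4\}$.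
   Context: For a graph $H$ write $v_H,e_H$ for its numbers of vertices and edges. For a graph $F$, an integer $n$, a probability $p$ and a set $W\subseteq V(F)$ spanning no edges of $F$, define $\Phi_{F,W}=\Phi_{F,W}(n,p):=\min\{n^{v_H-v_{H[W]}}p^{e_H}: H\subseteq F,\ e_H>0\}$, where $v_{H[W]}=|V(H)\cap W|$; and $\Phi_F:=\Phi_{F,\emptyset}=\min\{n^{v_H}p^{e_H}:H\subseteq F, e_H>0\}$. For a single vertex $w$ write $\Phi_{F,w}:=\Phi_{F,\{w\}}$. *)

From HB Require Import structures.
From mathcomp Require Import all_boot all_order all_algebra.
From mathcomp Require Import reals constructive_ereal exp.
Set Implicit Arguments. Unset Strict Implicit. Unset Printing Implicit Defensive.
Import Order.TTheory GRing.Theory Num.Theory.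
Local Open Scope ring_scope.

(* A (finite simple) graph inside an ambient finite type T:
   a vertex set and a set of edges, each edge a 2-element subset of the vertex set. *)
Definition graph (T : finType) := ({set T} * {set {set T}})%type.

Definition is_graph (T : finType) (G : graph T) : bool :=
  [forall e in G.2, (e \subset G.1) && (#|e| == 2)%N].

Definition subgraph (T : finType) (H G : graph T) : bool :=
  [&& is_graph H, H.1 \subset G.1 & H.2 \subset G.2].

Definition spans_no_edge (T : finType) (G : graph T) (W : {set T}) : bool :=
  [forall e in G.2, ~~ (e \subset W)].

(* Phi_{F,W}(n,p) = min { n^(v_H - v_{H[W]}) p^(e_H) : H subgraph of F, e_H > 0 },
   with the convention min(empty) = +oo. *)
Definition Phi (R : realType) (n : nat) (p : R) (T : finType) (F : graph T)
    (W : {set T}) : \bar R :=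
  \big[Order.min/+oo%E]_(H : graph T | subgraph H F && (0 < #|H.2|)%N)
     (((n%:R : R) ^+ (#|H.1| - #|H.1 :&: W|) * p ^+ #|H.2|)%:E).

Definition Kcomplete (k : nat) : graph 'I_k :=
  ([set: 'I_k], [set e : {set 'I_k} | #|e| == 2%N]).

Definition Kminus (k : nat) (u w : 'I_k) : graph 'I_k :=
  ([set: 'I_k], [set e : {set 'I_k} | #|e| == 2%N] :\ [set u; w]).

Definition gunion (T : finType) (G H : graph T) : graph T :=
  (G.1 :|: H.1, G.2 :|: H.2).

From HB Require Import structures.
From mathcomp Require Import all_boot all_order all_algebra.
From mathcomp Require Import reals constructive_ereal exp.
From mathcomp Require Import zify.
Import Order.TTheory GRing.Theory Num.Theory.
Local Open Scope ring_scope.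

Set Implicit Arguments. Unset Strict Implicit.

(* With t := n^(1/k) the hypothesis on p reads p t^2 >= C, and a subgraph with
   v <= k vertices and e >= 1 edges has weight t^(kv) p^e >= C t^(kv - 2e).
   Parts 1 and 2 then follow from 2e <= v(v-1), with one edge fewer when both
   ends of the removed edge are present.  For part 3, a subgraph of F3 ∪ F4 is
   the union of its traces on F3 and F4, whose free vertices overlap only in
   the common vertices of F3 and F4. *)

Lemma mul2_bin2 v : (2 * 'C(v, 2) = v * (v - 1))%N.
Proof. by rewrite mul2n bin2 halfK oddM subn1; case: v => //= v; rewrite andNb subn0. Qed.

Lemma edges_exponent_le (k v e : nat) :
  (0 < v <= k)%N -> (2 * e <= v * (v - 1))%N -> (k + 2 * e <= k * v)%N.
Proof. by nia. Qed.

Lemma edges_exponent_pred_le (k v e : nat) :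
  (2 <= v < k)%N -> (2 * e <= v * (v - 1))%N -> (k - 2 + 2 * e <= k * (v - 1))%N.
Proof. by nia. Qed.

Section GraphCounting.
Variable T : finType.
Implicit Types (H F : graph T) (e W : {set T}).

Lemma edges_subset_draws H :
  is_graph H -> H.2 \subset [set e : {set T} | e \subset H.1 & #|e| == 2%N].
Proof. by move=> gH; apply/subsetP => e eH; rewrite inE; have := forallP gH e; rewrite eH. Qed.

Lemma edges_le_bin2 H : is_graph H -> (#|H.2| <= 'C(#|H.1|, 2))%N.
Proof. by move=> gH; rewrite -cards_draws subset_leq_card ?edges_subset_draws. Qed.

Lemma edges_lt_bin2 H e :
  is_graph H -> e \subset H.1 -> #|e| = 2%N -> e \notin H.2 ->
  (#|H.2| < 'C(#|H.1|, 2))%N.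
Proof.
move=> gH seH e2 eNH; rewrite -cards_draws proper_card //.
apply/properP; split; first exact: edges_subset_draws.
by exists e; rewrite // inE seH e2.
Qed.

Lemma edges_double_le H : is_graph H -> (2 * #|H.2| <= #|H.1| * (#|H.1| - 1))%N.
Proof. by move=> gH; rewrite -mul2_bin2 leq_mul2l edges_le_bin2. Qed.

Lemma edges_double_lt H e :
  is_graph H -> e \subset H.1 -> #|e| = 2%N -> e \notin H.2 ->
  (2 * #|H.2| + 2 <= #|H.1| * (#|H.1| - 1))%N.
Proof. by move=> gH seH e2 eNH; rewrite -mul2_bin2 -mulnSr leq_mul2l (edges_lt_bin2 gH seH). Qed.

Lemma vertices_ge2 H : is_graph H -> (0 < #|H.2|)%N -> (2 <= #|H.1|)%N.
Proof. by move=> gH /leq_trans/(_ (edges_le_bin2 gH)); rewrite bin_gt0. Qed.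

Definition gmeet H F : graph T := (H.1 :&: F.1, H.2 :&: F.2).

Lemma subgraph_gmeet H F : is_graph H -> is_graph F -> subgraph (gmeet H F) F.
Proof.
move=> gH gF; rewrite /subgraph !subsetIr !andbT.
apply/forallP => e; apply/implyP => /setIP[eH eF].
have /andP[sH ->] := implyP (forallP gH e) eH.
by have /andP[sF _] := implyP (forallP gF e) eF; rewrite subsetI sH sF.
Qed.

Lemma gmeet_edgesU H F G :
  H.2 \subset (gunion F G).2 -> H.2 = (gmeet H F).2 :|: (gmeet H G).2.
Proof. by move=> sH; rewrite -setIUr (setIidPl sH). Qed.

Lemma gmeet_free_verticesU H F G W W' :
  H.1 \subset (gunion F G).1 -> [disjoint W & G.1] -> [disjoint W' & F.1] ->
  H.1 :\: (W :|: W') = ((gmeet H F).1 :\: W) :|: ((gmeet H G).1 :\: W').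
Proof.
move=> sH dWG dW'F; apply/setP => y; rewrite !inE.
have := subsetP sH y; rewrite inE.
case: (boolP (y \in H.1)) => [yH /(_ isT)|]; last by rewrite !andbF.
case yF: (y \in F.1); case yG: (y \in G.1) => //= _;
  rewrite ?(disjointFl dWG yG) ?(disjointFl dW'F yF) ?andbT ?orbF //.
Qed.

End GraphCounting.

Lemma disjoint_subsetI (T : finType) (W A B : {set T}) :
  W \subset A -> [disjoint W & A :&: B] = [disjoint W & B].
Proof. by move=> sWA; rewrite -!setI_eq0 setIA (setIidPl sWA). Qed.

Section Phi.
Variables (R : realType) (n : nat) (p : R).
Implicit Types (T : finType).

Definition weight T (W : {set T}) (H : graph T) : R :=
  n%:R ^+ #|H.1 :\: W| * p ^+ #|H.2|.

Lemma le_Phi T (F : graph T) (W : {set T}) (a : \bar R) :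
  (forall H, subgraph H F -> (0 < #|H.2|)%N -> (a <= (weight W H)%:E)%E) ->
  (a <= Phi n p F W)%E.
Proof.
move=> aH; apply: (big_ind (fun x => a <= x)%E) => [|x y ax ay|H /andP[]].
- exact: leey.
- by rewrite le_min ax ay.
- by rewrite -cardsD; exact: aH.
Qed.

Lemma Phi_le_weight T (F H : graph T) (W : {set T}) :
  subgraph H F -> (0 < #|H.2|)%N -> (Phi n p F W <= (weight W H)%:E)%E.
Proof.
by move=> sHF eH; rewrite /Phi (bigD1 H) ?sHF ?eH //= /weight cardsD ge_min lexx.
Qed.

Lemma Phi_ge0 T (F : graph T) (W : {set T}) : 0 <= p -> (0 <= Phi n p F W)%E.
Proof. by move=> p0; apply: le_Phi => H _ _; rewrite lee_fin mulr_ge0 ?exprn_ge0. Qed.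

Hypotheses (n_gt0 : (0 < n)%N) (p_ge0 : 0 <= p) (p_le1 : p <= 1).

Lemma ler_monomial (a b c d : nat) :
  (a <= b)%N -> (d <= c)%N -> n%:R ^+ a * p ^+ c <= n%:R ^+ b * p ^+ d.
Proof.
move=> ab dc; apply: ler_pM; rewrite ?exprn_ge0 //.
- by apply: ler_weXn2l; rewrite // ler1n.
- exact: ler_wiXn2l.
Qed.

Lemma Phi_mono T (F G : graph T) (W W' : {set T}) :
  F.1 \subset G.1 -> F.2 \subset G.2 -> W \subset W' ->
  (Phi n p G W' <= Phi n p F W)%E.
Proof.
move=> sV sE sW; apply: le_Phi => H /and3P[gH sHV sHE] eH.
have sHG : subgraph H G by rewrite /subgraph gH (subset_trans sHV) ?(subset_trans sHE).
apply: le_trans (Phi_le_weight W' sHG eH) _; rewrite lee_fin ler_monomial //.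
by rewrite subset_leq_card ?setDS.
Qed.

Section Union.
Variables (T : finType) (F3 F4 : graph T) (W3 W4 : {set T}).
Hypotheses (gF3 : is_graph F3) (gF4 : is_graph F4).
Hypotheses (dW3 : [disjoint W3 & F4.1]) (dW4 : [disjoint W4 & F3.1]).

Let Phi3 := Phi n p F3 W3.
Let Phi4 := Phi n p F4 W4.

(* Either one trace of [H] has no edge and [H] is as heavy as the other one,
   or [weight H * n ^+ #|F3.1 :&: F4.1|] dominates the product of their weights. *)
Lemma Phi_gunion_ge :
  (Order.min (Order.min Phi3 Phi4) (Phi3 * Phi4 * (n%:R ^- #|F3.1 :&: F4.1|)%:E)
     <= Phi n p (gunion F3 F4) (W3 :|: W4))%E.
Proof.
apply: le_Phi => H /and3P[gH sV sE] eH.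
set H3 := gmeet H F3; set H4 := gmeet H F4.
have sH3 : subgraph H3 F3 by exact: subgraph_gmeet.
have sH4 : subgraph H4 F4 by exact: subgraph_gmeet.
have E := gmeet_edgesU sE; have V := gmeet_free_verticesU sV dW3 dW4.
rewrite -/H3 -/H4 in E V.
rewrite /weight V E !ge_min.
have [e3|e3] := posnP #|H3.2|; have [e4|e4] := posnP #|H4.2|.
- by move: eH; rewrite E (cards0_eq e3) (cards0_eq e4) setU0 cards0.
- apply/orP; left; apply/orP; right; rewrite (cards0_eq e3) set0U.
  apply: le_trans (Phi_le_weight W4 sH4 e4) _.
  by rewrite lee_fin ler_monomial // subset_leq_card ?subsetUr.
- apply/orP; left; apply/orP; left; rewrite (cards0_eq e4) setU0.
  apply: le_trans (Phi_le_weight W3 sH3 e3) _.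
  by rewrite lee_fin ler_monomial // subset_leq_card ?subsetUl.
apply/orP; right.
have n0 : 0 < n%:R :> R by rewrite ltr0n.
apply: (@le_trans _ _ ((weight W3 H3 * weight W4 H4 * n%:R ^- #|F3.1 :&: F4.1|)%:E)).
  rewrite EFinM; apply: lee_wpmul2r; first by rewrite lee_fin invr_ge0 exprn_ge0 ?ltW.
  by rewrite EFinM; apply: lee_pmul; rewrite ?Phi_ge0 ?Phi_le_weight.
rewrite lee_fin ler_pdivrMr ?exprn_gt0 // /weight mulrACA -!exprD mulrAC -exprD.
apply: ler_monomial; last by rewrite cardsU leq_subr.
rewrite -cardsUI leq_add2l subset_leq_card //.
by apply/subsetP => y; rewrite !inE => /and4P[/and3P[_ _ ->] _ _ ->].
Qed.

Hypotheses (Phi4_ge1 : (1 <= Phi4)%E) (disjF : F3.1 :&: F4.1 = set0).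

Lemma Phi_gunion_disjoint :
  Phi n p (gunion F3 F4) (W3 :|: W4) = Order.min Phi3 Phi4.
Proof.
apply/le_anti/andP; split.
  by rewrite le_min !Phi_mono ?subsetUl ?subsetUr.
apply: le_trans Phi_gunion_ge; rewrite disjF cards0 expr0 invr1 mule1.
rewrite le_min lexx ge_min lee_pemulr ?Phi_ge0 //.
Qed.

End Union.
End Phi.

Lemma powR_natr_div (R : realType) (N : R) (c k : nat) :
  0 <= N -> N `^ (c%:R / k%:R) = (N `^ k%:R^-1) ^+ c.
Proof. by move=> N0; rewrite mulrC powRrM powR_mulrn ?powR_ge0. Qed.

Section Threshold.
Variables (R : realType) (C p : R) (n k : nat).
Hypotheses (C_gt1 : 1 < C) (n_gt0 : (0 < n)%N) (k_ge2 : (2 <= k)%N).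
Hypotheses (p_ge0 : 0 <= p) (p_ge : C * n%:R `^ (- (2 / k%:R)) <= p).

Let t := n%:R `^ k%:R^-1 : R.

Let t_ge1 : 1 <= t.
Proof. by rewrite -(powRr0 n%:R) ler_powR ?ler1n ?invr_ge0. Qed.

Let k_neq0 : k%:R != 0 :> R.
Proof. by rewrite pnatr_eq0 -lt0n (leq_trans _ k_ge2). Qed.

Let n_expr : n%:R = t ^+ k.
Proof. by rewrite -powR_natr_div // divff ?powRr1. Qed.

Let density : C <= p * t ^+ 2.
Proof.
have t2_gt0 : 0 < t ^+ 2 by rewrite exprn_gt0 // (lt_le_trans ltr01).
by rewrite -ler_pdivrMr // -powR_natr_div // -powRN.
Qed.

(* [t^a p^e >= t^(b + 2e) p^e = t^b (p t^2)^e >= t^b C^e >= C t^b] *)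
Let density_bound (a b e : nat) :
  (0 < e)%N -> (b + 2 * e <= a)%N -> C * t ^+ b <= t ^+ a * p ^+ e.
Proof.
move=> e_gt0 le_ba.
have t_ge0 : 0 <= t by rewrite (le_trans ler01).
have C_ge0 : 0 <= C by rewrite ltW // (lt_trans ltr01).
have Cpt : C <= (p * t ^+ 2) ^+ e.
  apply: le_trans (_ : C ^+ e <= _); first by rewrite ler_eXnr // ltW.
  by apply: lerXn2r; rewrite ?nnegrE ?(le_trans C_ge0 density).
rewrite -(subnK le_ba) exprD -mulrA.
apply: le_trans (_ : t ^+ (b + 2 * e) * p ^+ e <= _).
  by rewrite exprD exprM -mulrA -exprMn mulrC [_ * p]mulrC ler_wpM2l ?exprn_ge0.
by apply: ler_peMl; rewrite ?exprn_ege1 ?mulr_ge0 ?exprn_ge0.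
Qed.

Let powR_one_sub : n%:R `^ (1 - 2 / k%:R) = t ^+ (k - 2).
Proof. by rewrite -powR_natr_div // natrB // mulrBl divff. Qed.

Let weight_root (T : finType) (W : {set T}) (H : graph T) :
  weight n p W H = t ^+ (k * #|H.1 :\: W|) * p ^+ #|H.2|.
Proof. by rewrite /weight n_expr exprM. Qed.

Lemma Phi_set0_ge (T : finType) (F : graph T) :
  (#|F.1| <= k)%N -> ((C * n%:R)%:E <= Phi n p F set0)%E.
Proof.
move=> Fk; apply: le_Phi => H /and3P[gH sHF _] eH.
rewrite lee_fin weight_root setD0 {1}n_expr density_bound //.
have v2 := vertices_ge2 gH eH; have vk := leq_trans (subset_leq_card sHF) Fk.
by rewrite edges_exponent_le ?edges_double_le ?vk ?(ltnW v2).
Qed.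

Lemma Phi_nonedge_ge (T : finType) (F : graph T) (u w : T) :
  (#|F.1| <= k)%N -> u \in F.1 -> u != w -> [set u; w] \notin F.2 ->
  ((Order.min (C * n%:R `^ (1 - 2 / k%:R)) (C * n%:R `^ (2 / k%:R)))%:E
     <= Phi n p F [set w])%E.
Proof.
move=> Fk uF uw uwF.
rewrite powR_one_sub powR_natr_div //.
apply: le_Phi => H /and3P[gH sHF sHE] eH.
rewrite lee_fin weight_root ge_min.
have v2 := vertices_ge2 gH eH; have vk := leq_trans (subset_leq_card sHF) Fk.
have e_le := edges_double_le gH.
have m_eq : #|H.1 :\ w| = (#|H.1| - (w \in H.1))%N by rewrite (cardsD1 w H.1) addKn.
have [wH|wH] := boolP (w \in H.1); last first.
  apply/orP; left; rewrite m_eq (negbTE wH) subn0 density_bound //.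
  apply: (leq_trans _ (edges_exponent_le _ e_le)); first by rewrite leq_add2r leq_subr.
  by rewrite vk ltnW.
rewrite m_eq wH /=.
have [uH|uH] := boolP (u \in H.1); last first.
  have vF : (#|H.1| < #|F.1|)%N.
    by rewrite proper_card //; apply/properP; split => //; exists u.
  apply/orP; left; rewrite density_bound // edges_exponent_pred_le //.
  by rewrite v2 (leq_trans vF Fk).
have uwH : [set u; w] \subset H.1 by rewrite subUset !sub1set uH wH.
have := edges_double_lt gH uwH _ (contra (subsetP sHE _) uwF).
rewrite cards2 uw => /(_ erefl) e_lt.
apply/orP; right; rewrite density_bound // addnC (leq_trans e_lt) //.
by rewrite leq_mul2r vk orbT.
Qed.

Lemma root_le_min : (3 <= k)%N ->
  C * n%:R `^ (1 / k%:R)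
    <= Order.min (C * n%:R `^ (1 - 2 / k%:R)) (C * n%:R `^ (2 / k%:R)).
Proof.
move=> k_ge3; have C_gt0 : 0 < C by rewrite (lt_trans ltr01).
rewrite div1r powR_one_sub powR_natr_div // le_min !ler_pM2l //.
by rewrite -{1}[t]expr1 !ler_eXnr // subn_gt0.
Qed.

End Threshold.

Theorem lemma2p7 (R : realType) :
  (* part 1 *)
  (forall (C : R) (k k' n : nat) (p : R),
      1 < C -> (2 <= k)%N -> (1 <= n)%N -> 0 <= p <= 1 ->
      C * powR (n%:R) (- (2 / k%:R)) <= p ->
      (k' <= k)%N ->
      ((C * n%:R)%:E <= Phi n p (Kcomplete k') set0)%E)
  /\
  (* part 2 *)
  (forall (C : R) (k k' n : nat) (p : R) (u w : 'I_k'),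
      1 < C -> (2 <= k)%N -> (1 <= n)%N -> 0 <= p <= 1 ->
      C * powR (n%:R) (- (2 / k%:R)) <= p ->
      (3 <= k')%N -> (k' <= k)%N -> u != w ->
      ((C * n%:R)%:E <= Phi n p (Kminus u w) set0)%E /\
      ((Order.min (C * powR (n%:R) (1 - 2 / k%:R)) (C * powR (n%:R) (2 / k%:R)))%:E
         <= Phi n p (Kminus u w) [set w])%E /\
      C * powR (n%:R) (1 / k%:R)
         <= Order.min (C * powR (n%:R) (1 - 2 / k%:R)) (C * powR (n%:R) (2 / k%:R)))
  /\
  (* part 3, F5: union meeting in exactly one vertex x *)
  (forall (T : finType) (n : nat) (p : R) (F3 F4 : graph T) (W3 W4 : {set T}) (x : T),
      (1 <= n)%N -> 0 <= p <= 1 ->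
      is_graph F3 -> is_graph F4 ->
      W3 \subset F3.1 -> W4 \subset F4.1 ->
      spans_no_edge F3 W3 -> spans_no_edge F4 W4 ->
      (1 <= Phi n p F3 W3)%E -> (1 <= Phi n p F4 W4)%E ->
      F3.1 :&: F4.1 = [set x] -> x \notin W3 -> x \notin W4 ->
      (Order.min (Order.min (Phi n p F3 W3) (Phi n p F4 W4))
                 (Phi n p F3 W3 * Phi n p F4 W4 * (n%:R^-1)%:E)
         <= Phi n p (gunion F3 F4) (W3 :|: W4))%E)
  /\
  (* part 3, F6: disjoint union *)
  (forall (T : finType) (n : nat) (p : R) (F3 F4 : graph T) (W3 W4 : {set T}),
      (1 <= n)%N -> 0 <= p <= 1 ->
      is_graph F3 -> is_graph F4 ->
      W3 \subset F3.1 -> W4 \subset F4.1 ->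
      spans_no_edge F3 W3 -> spans_no_edge F4 W4 ->
      (1 <= Phi n p F3 W3)%E -> (1 <= Phi n p F4 W4)%E ->
      F3.1 :&: F4.1 = set0 ->
      Phi n p (gunion F3 F4) (W3 :|: W4)
        = Order.min (Phi n p F3 W3) (Phi n p F4 W4)).
Proof.
split; [|split; [|split]].
- move=> C k k' n p C_gt1 k_ge2 n_gt0 /andP[p_ge0 p_le1] p_ge k'k.
  by apply: (Phi_set0_ge (k := k)); rewrite // cardsT card_ord.
- move=> C k k' n p u w C_gt1 k_ge2 n_gt0 /andP[p_ge0 p_le1] p_ge k'_ge3 k'k uw.
  split; first by apply: (Phi_set0_ge (k := k)); rewrite // /Kminus cardsT card_ord.
  split; last by apply: root_le_min; rewrite // (leq_trans k'_ge3).
  apply: (Phi_nonedge_ge C_gt1 n_gt0 k_ge2 p_ge0 p_ge _ _ uw);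
  by rewrite // /Kminus ?cardsT ?card_ord ?inE ?eqxx.
- move=> T n p F3 F4 W3 W4 x n_gt0 /andP[p_ge0 p_le1] gF3 gF4 sW3 sW4 _ _ _ _ F34 xW3 xW4.
  have -> : n%:R^-1 = n%:R ^- #|F3.1 :&: F4.1| :> R by rewrite F34 cards1 expr1.
  apply: Phi_gunion_ge => //.
    by rewrite -(disjoint_subsetI _ sW3) F34 disjoint_sym disjoints1.
  by rewrite -(disjoint_subsetI _ sW4) setIC F34 disjoint_sym disjoints1.
- move=> T n p F3 F4 W3 W4 n_gt0 /andP[p_ge0 p_le1] gF3 gF4 sW3 sW4 _ _ _ Phi4_ge1 F34.
  apply: Phi_gunion_disjoint => //.
    by rewrite -(disjoint_subsetI _ sW3) F34 -setI_eq0 setI0.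
  by rewrite -(disjoint_subsetI _ sW4) setIC F34 -setI_eq0 setI0.
Qed.
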